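(* Let $G$ be a group and $A$ a set with at least two elements. Let $n \geq 2$ be an integer such that there is $g \in G$ whose order is greater than $n$ (possibly infinite). Then there exists a lazy cellular automaton $\tau : A^G \to A^G$ with $\mathrm{ord}(\tau) = n$.
   Context: $A^G$ is the set of maps $G \to A$ with shift action $(g\cdot x)(h) := x(hg)$. A cellular automaton is a map $\tau : A^G \to A^G$ with a finite $S \subseteq G$ and $\mu : A^S \to A$ such that $\tau(x)(g) = \mu((g\cdot x)|_S)$. $\tau$ is lazy if there is such a local defining map $\mu : A^S \to A$ with $e \in S$ ($e$ the identity of $G$) and $p \in A^S$ such that for all $z \in A^S$: $\mu(z) = z(e)$ iff $z \neq p$. $\tau^k$ is the $k$-fold composition, $\tau^0$ the identity; $\mathrm{ord}(\tau) := |\{\tau^k : k \in \mathbb{N}\}|$, $\mathbb{N}=\{0,1,\dots\}$. The order of $g \in G$ is the least $m \ge 1$ with $g^m = e$, or $\infty$ if none exists. *)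

From HB Require Import structures.
From mathcomp Require Import all_boot.
From Stdlib Require List.

Set Implicit Arguments.
Unset Strict Implicit.
Unset Printing Implicit Defensive.

Local Open Scope group_scope.

Section CA.
Variables (G : groupType) (A : Type).

Definition shift (g : G) (x : G -> A) : G -> A := fun h => x (h * g).

Definition pattern (S : seq G) := {s : G | s \in S} -> A.

Definition restr (S : seq G) (x : G -> A) : pattern S := fun s => x (sval s).

Definition local_defining_map (tau : (G -> A) -> (G -> A)) (S : seq G)
    (mu : pattern S -> A) : Prop :=
  forall (x : G -> A) (g : G), tau x g = mu (@restr S (shift g x)).

Definition cellular_automaton (tau : (G -> A) -> (G -> A)) : Prop :=
  exists (S : seq G) (mu : pattern S -> A), local_defining_map tau mu.

Definition lazy_ca (tau : (G -> A) -> (G -> A)) : Prop :=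
  exists (S : seq G) (mu : pattern S -> A) (he : (1 : G) \in S) (p : pattern S),
    local_defining_map tau mu /\
    forall z : pattern S, mu z = z (exist _ 1 he) <-> z <> p.

End CA.

Definition has_card (T : Type) (P : T -> Prop) (n : nat) : Prop :=
  exists s : list T, List.length s = n /\ List.NoDup s /\
    forall t, P t <-> List.In t s.

Definition ca_order_eq (X : Type) (tau : X -> X) (n : nat) : Prop :=
  has_card (fun f : X -> X => exists k : nat, f = iter k tau) n.

Definition order_gt (G : groupType) (g : G) (n : nat) : Prop :=
  forall m : nat, (1 <= m <= n)%N -> (g ^+ m)%g <> 1%g.

(** The neighbourhood is [1; g; g^n] and the rule writes [b] at [h] exactly
    when the pattern [(a, b, a)] is seen at [(h, g h, g^n h)].  Hence [b]s
    are never erased and spread one step per time unit backwards along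
    [g]-orbits.  A cell can only change at time [k] if a chain of changes
    reaches [g^(k+1) h] at time [0]; after [n - 1] steps the cell [g^n h]
    has therefore already turned to [b], blocking every further change, so
    [tau^n = tau^(n-1)].  Starting from a single [b] at [g^(n-1)], the cell
    [1] becomes [b] exactly at time [n - 1], so [tau^(n-2) <> tau^(n-1)];
    the order of [g] exceeding [n] keeps the cells involved distinct. *)

From HB Require Import structures.
From mathcomp Require Import all_boot.
From mathcomp Require Import zify.
From Stdlib Require Import ClassicalEpsilon Classical FunctionalExtensionality.
From Stdlib Require List.

Set Implicit Arguments.
Unset Strict Implicit.
Unset Printing Implicit Defensive.

Lemma ca_order_eq_iter_range (X : Type) (f : X -> X) (N : nat) :
    (forall i j, (i < j < N)%N -> iter i f <> iter j f) ->
    (forall k, exists2 k', (k' < N)%N & iter k f = iter k' f) ->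
  ca_order_eq f N.
Proof.
move=> iter_inj iter_range.
exists (List.map (fun k => iter k f) (List.seq 0 N)).
split; first by rewrite List.length_map List.length_seq.
split.
  apply: List.NoDup_map_NoDup_ForallPairs; last exact: List.seq_NoDup.
  move=> i j /List.in_seq [_ /ltP ltiN] /List.in_seq [_ /ltP ltjN] Eij.
  case: (ltngtP i j) => // [ltij | ltji]; exfalso.
  - by apply: (iter_inj i j) => //; rewrite ltij.
  - by apply: (iter_inj j i) => //; rewrite ltji.
move=> h; split.
  case=> k ->; have [k' ltk'N ->] := iter_range k.
  by apply/List.in_map_iff; exists k'; split => //; apply/List.in_seq; lia.
by case/List.in_map_iff=> k [<- _]; exists k.
Qed.

Lemma ca_order_eq_iter_stable (X : Type) (f : X -> X) (m : nat) :
    iter m f <> iter m.+1 f -> iter m.+2 f = iter m.+1 f ->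
  ca_order_eq f m.+2.
Proof.
move=> neq_m fix_m.
have iterDf k l : iter (k + l) f = iter k f \o iter l f.
  by apply: functional_extensionality => x; rewrite /= iterD.
have stable d : iter (d + m.+1) f = iter m.+1 f.
  elim: d => [//|d IH]; apply: functional_extensionality => x.
  by rewrite addSn iterS IH -iterS fix_m.
apply: ca_order_eq_iter_range => [i j /andP [ltij ltjm] Eij | k].
  have : iter (m - i + i) f = iter (m - i + j) f by rewrite !iterDf Eij.
  rewrite subnK; last lia.
  by rewrite -(subnK (_ : m.+1 <= m - i + j)%N) ?stable //; lia.
case: (ltnP k m.+2) => [ltkm | lemk]; first by exists k.
by exists m.+1 => //; rewrite -(subnK (ltnW lemk)) stable.
Qed.

Section LazyCA.
Local Open Scope group_scope.

Variables (G : groupType) (A : Type) (a b : A).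
Hypothesis hab : a <> b.
Variables (n : nat) (g : G).
Hypothesis hn : (1 < n)%N.
Hypothesis hg : order_gt g n.

Lemma expg_order_gt_neq i j : (i < j <= i + n)%N -> g ^+ i <> g ^+ j.
Proof.
move=> /andP [ltij leji] Eij; apply: (@hg (j - i)); first lia.
apply: (@mulgI _ (g ^+ i)).
by rewrite mulg1 -expgnDr subnKC ?Eij // ltnW.
Qed.

Lemma one_neq_g : (1 : G) != g.
Proof. by apply/eqP; rewrite -(expg0 g) -{2}[g]expg1; apply: expg_order_gt_neq; lia. Qed.

Lemma expg_n_neq_g : g ^+ n != g.
Proof. by apply/eqP; rewrite -{2}[g]expg1; apply/nesym/expg_order_gt_neq; lia. Qed.

Definition nbhd : seq G := [:: 1; g; g ^+ n].

Lemma one_in_nbhd : (1 : G) \in nbhd.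
Proof. by rewrite inE eqxx. Qed.

Definition trigger : pattern A nbhd := fun s => if sval s == g then b else a.

Definition rule (z : pattern A nbhd) : A :=
  if excluded_middle_informative (z = trigger) then b
  else z (exist _ 1 one_in_nbhd).

Definition tau (x : G -> A) : G -> A := fun h => rule (restr (shift h x)).

Lemma lazy_tau : lazy_ca tau.
Proof.
exists nbhd, rule, one_in_nbhd, trigger; split=> // z.
rewrite /rule; case: excluded_middle_informative => [zt | //] /=.
split=> [|/(_ zt) //].
by rewrite zt /trigger /= (negbTE one_neq_g) => /esym.
Qed.

Definition fires (x : G -> A) (h : G) : Prop :=
  [/\ x h = a, x (g * h) = b & x (g ^+ n * h) = a].

Lemma restr_shift_trigger x h : restr (shift h x) = trigger <-> fires x h.
Proof.
have g_in : g \in nbhd by rewrite !inE eqxx orbT.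
have gn_in : g ^+ n \in nbhd by rewrite !inE eqxx !orbT.
split=> [E | [x1 xg xgn]].
  have := f_equal (fun z => z (exist _ 1 one_in_nbhd)) E.
  have := f_equal (fun z => z (exist _ g g_in)) E.
  have := f_equal (fun z => z (exist _ (g ^+ n) gn_in)) E.
  rewrite /restr /shift /trigger /= eqxx (negbTE one_neq_g).
  by rewrite (negbTE expg_n_neq_g) mul1g.
apply: functional_extensionality => -[s s_in]; rewrite /restr /shift /trigger /=.
by move: s_in; rewrite !inE => /or3P [] /eqP ->;
  rewrite ?eqxx ?(negbTE expg_n_neq_g) // (negbTE one_neq_g) mul1g.
Qed.

Lemma tau_fires x h : fires x h -> tau x h = b.
Proof.
move=> /restr_shift_trigger E.
by rewrite /tau /rule; case: excluded_middle_informative.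
Qed.

Lemma tau_idle x h : ~ fires x h -> tau x h = x h.
Proof.
move=> not_fires; rewrite /tau /rule.
case: excluded_middle_informative => [E | _] /=.
  by case: not_fires; apply/restr_shift_trigger.
by rewrite /restr /shift /= mul1g.
Qed.

Lemma tau_fixes_b x h : x h = b -> tau x h = b.
Proof. by move=> xb; rewrite tau_idle // => -[xa _ _]; apply: hab; rewrite -xa. Qed.

Lemma tau_eq_a x h : tau x h = a -> x h = a.
Proof.
case: (classic (fires x h)) => [/tau_fires -> /esym // | /tau_idle -> //].
Qed.

Lemma tau_moved x h : tau x h <> x h -> fires x h.
Proof. by move=> moved; apply: NNPP => /tau_idle. Qed.

Definition moves (x : G -> A) (k : nat) (h : G) : Prop :=
  iter k.+1 tau x h <> iter k tau x h.

Lemma moves_fires x k h : moves x k h -> fires (iter k tau x) h.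
Proof. exact: tau_moved. Qed.

Lemma moves_succ x k h : moves x k.+1 h -> moves x k (g * h).
Proof.
move=> /moves_fires [y1 yg ygn] E; rewrite iterS in y1 yg ygn.
set y := iter k tau x in y1 yg ygn E.
have fires_y : fires y h by split; [exact: tau_eq_a | rewrite -E | exact: tau_eq_a].
by apply: hab; rewrite -y1 tau_fires.
Qed.

Lemma moves_add x k j h : moves x (k + j) h -> moves x k (g ^+ j * h).
Proof.
elim: j h => [|j IH] h; first by rewrite addn0 expg0 mul1g.
by rewrite addnS => /moves_succ /IH; rewrite mulgA -expgSr.
Qed.

Lemma iter_tau_fixes_b x k d h : iter k tau x h = b -> iter (d + k) tau x h = b.
Proof. by move=> xb; elim: d => [//|d IH]; rewrite addSn iterS tau_fixes_b. Qed.

(* The changes at [h] (time [k]) and at [g^(n-1) h] (time [k - (n-1)]) are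
   incompatible: the latter writes [b] at [g^n h], the former needs [a] there. *)
Lemma moves_lt x k h : moves x k h -> (k < n.-1)%N.
Proof.
move=> moved; rewrite ltnNge; apply/negP => lenk.
have /moves_fires [_ _ late_a] := moved.
move: moved; rewrite -(subnK lenk) => /moves_add /moves_fires [_ early_b _].
rewrite mulgA -expgS (ltn_predK hn) in early_b.
by apply: hab; rewrite -late_a -(subnK lenk) addnC iter_tau_fixes_b.
Qed.

Lemma iter_tau_stable : iter n tau = iter n.-1 tau.
Proof.
apply: functional_extensionality => x; apply: functional_extensionality => h.
apply: NNPP; rewrite -{1}(ltn_predK hn) => /moves_lt; by rewrite ltnn.
Qed.

Lemma iter_tau_light_cone x k h :
  iter k tau x h <> x h -> exists2 t, (t < k)%N & x (g ^+ t.+1 * h) = b.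
Proof.
elim: k => [//|k IH] changed.
case: (classic (iter k tau x h = x h)) => [xk | /IH [t ltk xb]]; last first.
  by exists t => //; apply: ltnW.
exists k => //.
have : moves x (0 + k) h by rewrite /moves xk.
by move=> /moves_add /moves_fires [_ + _]; rewrite mulgA -expgS.
Qed.

Definition seed : G -> A := fun h => if h == g ^+ n.-1 then b else a.

Lemma iter_tau_seed_a k j :
    (forall t, (t <= k)%N -> g ^+ (t + j) <> g ^+ n.-1) ->
  iter k tau seed (g ^+ j) = a.
Proof.
move=> far.
have seed_a : seed (g ^+ j) = a by rewrite /seed ifF //; apply/eqP/(far 0%N).
apply: NNPP; rewrite -seed_a => /iter_tau_light_cone [t ltk].
by rewrite -expgnDr /seed; case: eqP => [/(far t.+1 ltk) | _ /hab].
Qed.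

Lemma iter_tau_seed_b k : (k <= n.-1)%N -> iter k tau seed (g ^+ (n.-1 - k)) = b.
Proof.
elim: k => [_|k IH lekn]; first by rewrite subn0 /= /seed eqxx.
rewrite iterS tau_fires //; split.
- apply: iter_tau_seed_a => t letk.
  by apply: expg_order_gt_neq; lia.
- by rewrite -expgS -IH ?(ltnW lekn) //; congr (_ _ (_ ^+ _)); lia.
- rewrite -expgnDr; apply: iter_tau_seed_a => t letk.
  by apply/nesym/expg_order_gt_neq; lia.
Qed.

Lemma iter_tau_neq : iter n.-2 tau <> iter n.-1 tau.
Proof.
move=> /(f_equal (fun f => f seed (g ^+ 0))).
rewrite iter_tau_seed_a => [|t letn].
  by rewrite -(subnn n.-1) iter_tau_seed_b // => /hab.
by apply: expg_order_gt_neq; lia.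
Qed.

End LazyCA.

Theorem corollary4 (G : groupType) (A : Type) (a b : A) (hab : a <> b)
    (n : nat) (hn : 2 <= n) (g : G) (hg : order_gt g n) :
  exists tau : (G -> A) -> (G -> A),
    lazy_ca tau /\ ca_order_eq tau n.
Proof.
exists (tau a b n g); split; first exact: lazy_tau.
case: n hn hg => [|[|m]] // hn hg.
apply: ca_order_eq_iter_stable.
- exact: iter_tau_neq.
- exact: iter_tau_stable.
Qed.
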